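(* Let $\mathcal{G}$ be a mutant-biased fitness graph and $k$ a budget. Let $S^*\in\arg\max_{S\subseteq V,|S|\le k}\operatorname{fp}_{\mathcal{G}}(S)$ and let $S_{\mathrm{gr}}$ be the output of the Greedy algorithm. Then $\operatorname{fp}_{\mathcal{G}}(S_{\mathrm{gr}})\ge(1-1/e)\operatorname{fp}_{\mathcal{G}}(S^* )$.
   Context: A fitness graph is $\mathcal{G}=(G,(m,r))$ where $G=(V,E,w)$ is a strongly connected directed graph, $w(u,\cdot)$ is a probability distribution over out-neighbours of $u$, and $r,m\colon V\to(0,\infty)$; it is mutant-biased if $m(u)\ge r(u)$ for all $u$. For a configuration (set of mutants) $X\subseteq V$, $f_X(u)=m(u)$ if $u\in X$, else $r(u)$. The Heterogeneous Moran process starts at $\mathcal{X}_0=S$; from $\mathcal{X}_t=X$ it picks $u$ with probability $f_X(u)/\sum_v f_X(v)$, then $v$ with probability $w(u,v)$, and $v$ takes the type of $u$. $\operatorname{fp}_{\mathcal{G}}(S)$ is the probability that the process eventually reaches $V$. The Greedy algorithm starts with $S=\emptyset$ and, for $k$ iterations, adds to $S$ a node $v\notin S$ maximizing $\operatorname{fp}_{\mathcal{G}}(S\cup\{v\})$; its output is $S_{\mathrm{gr}}$. *)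

From HB Require Import structures.
From mathcomp Require Import all_boot all_order all_algebra.
From mathcomp Require Import all_classical all_reals all_analysis.
Set Implicit Arguments. Unset Strict Implicit. Unset Printing Implicit Defensive.
Import Order.TTheory GRing.Theory Num.Theory.
Import numFieldNormedType.Exports.
Local Open Scope ring_scope.

Section Moran.
Variables (R : realType) (V : finType).

Definition is_fitness_graph (E : rel V) (w : V -> V -> R) (r m : V -> R) : Prop :=
  [/\ (forall u v, E u v -> 0 < w u v),
      (forall u v, ~~ E u v -> w u v = 0),
      (forall u, \sum_(v : V) w u v = 1),
      (forall u v, connect E u v) &
      (forall u, 0 < r u /\ 0 < m u)].

Definition mutant_biased (r m : V -> R) : Prop := forall u, r u <= m u.

Definition fitness (r m : V -> R) (X : {set V}) (u : V) : R :=
  if u \in X then m u else r u.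

Definition moran_step (X : {set V}) (u v : V) : {set V} :=
  if u \in X then v |: X else X :\ v.

Fixpoint reach_within (w : V -> V -> R) (r m : V -> R) (n : nat) (X : {set V}) : R :=
  if X == [set: V] then 1 else
  match n with
  | 0 => 0
  | n'.+1 => \sum_(u : V) \sum_(v : V)
       (fitness r m X u / \sum_(x : V) fitness r m X x) * w u v
         * reach_within w r m n' (moran_step X u v)
  end.

Definition fp (w : V -> V -> R) (r m : V -> R) (S : {set V}) : R :=
  limn (fun n : nat => reach_within w r m n S).

(* s (in order of insertion) is a run of the Greedy algorithm for k iterations:
   at step i, the node s_i is not in S_i = {s_0,..,s_{i-1}} and maximizes
   fp(S_i ∪ {v}) over v ∉ S_i. *)
Definition greedy_run (w : V -> V -> R) (r m : V -> R) (k : nat) (s : seq V) : Prop :=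
  size s = k /\
  forall (p : seq V) (v : V) (t : seq V), s = p ++ v :: t ->
    v \notin p /\
    forall x : V, x \notin p ->
      fp w r m (x |: [set y in p]) <= fp w r m (v |: [set y in p]).

Definition greedy_output (s : seq V) : {set V} := [set y in s].
End Moran.

(* Let time run lazily: pick u with probability m(u) / sum m whatever its
   type, then v with probability w(u, v), and let a resident u reproduce only
   if a coin of bias r(u) / m(u) succeeds (possible as r <= m); fp is harmonic
   for this lazy chain.  Driving all configurations with the same random
   outcome (u, v, coin) gives a step map that is monotone and commutes with
   unions.  So fp A - fp (A u B) and fp (A u B) + fp (A n B) - fp A - fp B are
   subharmonic for the coupled pair (A, B), and they are <= 0 once both sets
   are absorbed in {} or V; absorption is geometrically fast, hence they are
   <= 0 everywhere: fp is monotone and submodular.  The greedy analysis of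
   Nemhauser, Wolsey and Fisher for such functions then gives 1 - 1/e. *)

From HB Require Import structures.
From mathcomp Require Import all_boot all_order all_algebra.
From mathcomp Require Import all_classical all_reals all_analysis.
From mathcomp Require Import ring lra.
Import mathcomp.boot.finset.
Import Order.TTheory GRing.Theory Num.Theory.
Import numFieldNormedType.Exports.
Local Open Scope ring_scope.

Lemma expr_1subVn_le_expRN1 (R : realType) (k : nat) :
  (1 - k.+1%:R^-1) ^+ k.+1 <= (expR 1 : R)^-1.
Proof.
have K0 : k.+1%:R != 0 :> R by rewrite pnatr_eq0.
have c0 : 0 <= 1 - k.+1%:R^-1 :> R by rewrite subr_ge0 invf_le1 ?ler1n ?ltr0n.
have /(@lerXn2r _ k.+1) : 1 - k.+1%:R^-1 <= expR (- k.+1%:R^-1) :> R by exact: expR_ge1Dx.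
rewrite !nnegrE => /(_ c0 (expR_ge0 _)) /le_trans; apply.
by rewrite -expRM_natl mulrN divff // expRN.
Qed.

Section GreedyApproximation.
Context {R : realType} {V : finType} {f : {set V} -> R}.
Hypothesis f_mono : forall A B : {set V}, A \subset B -> f A <= f B.
Hypothesis f_submod : forall A B : {set V}, f (A :|: B) + f (A :&: B) <= f A + f B.
Hypothesis f_set0_ge0 : 0 <= f set0.

Definition greedy_seq (s : seq V) : Prop :=
  forall p v t, s = p ++ v :: t ->
    forall x, x \notin p -> f (x |: [set y in p]) <= f (v |: [set y in p]).

Lemma f_ge0 (A : {set V}) : 0 <= f A.
Proof. exact: le_trans f_set0_ge0 (f_mono _ _ (sub0set A)). Qed.

Lemma setU_le_sum_gains (A : {set V}) (l : seq V) :
  f (A :|: [set y in l]) <= f A + \sum_(x <- l) (f (x |: A) - f A).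
Proof.
elim: l => [|x l IH]; first by rewrite set_nil setU0 big_nil addr0.
have -> : A :|: [set y in x :: l] = (A :|: [set y in l]) :|: (x |: A).
  by apply/setP => y; rewrite !inE; case: (y == x); case: (y \in A); case: (y \in l).
have := f_submod (A :|: [set y in l]) (x |: A).
have : f A <= f ((A :|: [set y in l]) :&: (x |: A)).
  by apply: f_mono; rewrite subsetI subsetUl subsetUr.
rewrite big_cons; lra.
Qed.

Lemma greedy_gain {k : nat} {Sopt P : {set V}} {v : V} :
  (#|Sopt| <= k)%N -> (forall x, x \notin P -> f (x |: P) <= f (v |: P)) ->
  f Sopt - f P <= k%:R * (f (v |: P) - f P).
Proof.
move=> Sopt_k greedy.
have gain_ge0 : 0 <= f (v |: P) - f P by rewrite subr_ge0 f_mono // subsetUr.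
have gain_le x : f (x |: P) - f P <= f (v |: P) - f P.
  have [xP|/greedy] := boolP (x \in P); last by rewrite lerD2r.
  by rewrite (setUidPr _) ?sub1set // subrr.
have sum_le : \sum_(x <- enum Sopt) (f (x |: P) - f P) <= k%:R * (f (v |: P) - f P).
  apply: le_trans (ler_sum _ (fun x _ => gain_le x)) _.
  by rewrite big_enum sumr_const mulr_natl; apply: ler_wpMn2l.
have := setU_le_sum_gains P (enum Sopt); rewrite set_enum.
have : f Sopt <= f (P :|: Sopt) by rewrite f_mono // subsetUr.
lra.
Qed.

Lemma greedy_gap_contract {k : nat} {Sopt P : {set V}} {v : V} :
  (#|Sopt| <= k.+1)%N -> (forall x, x \notin P -> f (x |: P) <= f (v |: P)) ->
  f Sopt - f (v |: P) <= (1 - k.+1%:R^-1) * (f Sopt - f P).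
Proof.
move=> Sopt_k /(greedy_gain Sopt_k); rewrite -ler_pdivrMl ?ltr0n // => gain.
rewrite mulrBl mul1r; move: gain; set d := _ * (_ - _); lra.
Qed.

Lemma greedy_prefix_gap {k : nat} {Sopt : {set V}} {s : seq V} :
  (#|Sopt| <= k.+1)%N -> greedy_seq s -> forall p t, s = p ++ t ->
  f Sopt - f [set y in p] <= (1 - k.+1%:R^-1) ^+ size p * f Sopt.
Proof.
move=> Sopt_k greedy p; elim/last_ind: p => [|p v IH] t def_s.
  by rewrite set_nil expr0 mul1r gerBl f_ge0.
rewrite cat_rcons in def_s.
have -> : [set y in rcons p v] = v |: [set y in p].
  by apply/setP => y; rewrite !inE mem_rcons in_cons.
have greedy_v x : x \notin [set y in p] -> f (x |: [set y in p]) <= f (v |: [set y in p]).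
  by rewrite inE; exact: greedy def_s x.
apply: le_trans (greedy_gap_contract Sopt_k greedy_v) _.
rewrite size_rcons exprS -mulrA ler_wpM2l ?(IH _ def_s) //.
by rewrite subr_ge0 invf_le1 ?ler1n ?ltr0n.
Qed.

Lemma greedy_approx {k : nat} {Sopt : {set V}} {s : seq V} :
  (#|Sopt| <= k)%N -> size s = k -> greedy_seq s ->
  (1 - (expR 1)^-1) * f Sopt <= f [set y in s].
Proof.
move=> Sopt_k size_s greedy.
have := f_ge0 Sopt; have : 0 <= (expR 1 : R)^-1 by rewrite invr_ge0 expR_ge0.
case: k Sopt_k size_s => [|k] Sopt_k size_s.
  move: Sopt_k size_s; rewrite leqn0 => /eqP/cards0_eq -> /size0nil ->.
  rewrite set_nil; nra.
have := greedy_prefix_gap Sopt_k greedy s [::]; rewrite cats0 size_s => /(_ erefl).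
have := expr_1subVn_le_expRN1 R k.
set c := 1 - _; nra.
Qed.
End GreedyApproximation.

Lemma le0_geometric (R : realType) (x K q : R) :
  0 <= q -> q < 1 -> (forall j, x <= K * q ^+ j) -> x <= 0.
Proof.
move=> q_ge0 q_lt1 x_le.
have : ((fun j => K * q ^+ j) @ \oo --> K * 0)%classic.
  by apply: cvgMl_tmp; apply: cvg_expr; rewrite ger0_norm.
by rewrite mulr0 => /cvgr_to_ge; apply; exact: nearW.
Qed.

Section CoupledLazyChain.
Context {R : realType} {V : finType} {E : rel V} {w : V -> V -> R} {r m : V -> R}.
Variable v0 : V.
Hypothesis w_ge0 : forall u v, 0 <= w u v.
Hypothesis w_sum1 : forall u, \sum_v w u v = 1.
Hypothesis w_edge_gt0 : forall u v, E u v -> 0 < w u v.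
Hypothesis E_connect : forall u v, connect E u v.
Hypothesis r_gt0 : forall u, 0 < r u.
Hypothesis r_le_m : mutant_biased r m.

(* In the outcome (u, (v, b)), u reproduces onto v unless u is a resident and
   the coin b is false; b is true with weight r u and false with m u - r u. *)
Definition outcome := (V * (V * bool))%type.

Definition total_mass : R := \sum_u m u.

Definition outcome_prob (o : outcome) : R :=
  (if o.2.2 then r o.1 else m o.1 - r o.1) * w o.1 o.2.1 / total_mass.

Definition lazy_step (o : outcome) (X : {set V}) : {set V} :=
  if o.1 \in X then o.2.1 |: X else if o.2.2 then X :\ o.2.1 else X.

Definition pair_step (o : outcome) (s : {set V} * {set V}) :=
  (lazy_step o s.1, lazy_step o s.2).

Fixpoint expect (n : nat) (g : {set V} * {set V} -> R) (s : {set V} * {set V}) : R :=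
  if n is n'.+1 then \sum_o outcome_prob o * expect n' g (pair_step o s) else g s.

Lemma total_mass_gt0 : 0 < total_mass.
Proof.
rewrite /total_mass (bigD1 v0) //= ltr_pwDl ?(lt_le_trans (r_gt0 v0)) //.
by apply: sumr_ge0 => u _; exact: le_trans (ltW (r_gt0 u)) (r_le_m u).
Qed.

Lemma sum_outcomeE (F : outcome -> R) :
  \sum_o F o = \sum_u \sum_v (F (u, (v, true)) + F (u, (v, false))).
Proof.
rewrite (eq_bigr (fun o => F (o.1, o.2))); last by case.
rewrite -(pair_bigA _ (fun u x => F (u, x))) /=; apply: eq_bigr => u _.
rewrite (eq_bigr (fun o => F (u, (o.1, o.2)))); last by case.
rewrite -(pair_bigA _ (fun v b => F (u, (v, b)))) /=; apply: eq_bigr => v _.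
by rewrite big_bool /= addrC.
Qed.

Lemma outcome_prob_ge0 o : 0 <= outcome_prob o.
Proof.
rewrite /outcome_prob divr_ge0 ?(ltW total_mass_gt0) // mulr_ge0 //.
by case: ifP => _; [exact: ltW | rewrite subr_ge0].
Qed.

Lemma outcome_prob_sum1 : \sum_o outcome_prob o = 1.
Proof.
rewrite sum_outcomeE /outcome_prob /=.
under eq_bigr => u _ do under eq_bigr => v _ do rewrite -!mulrDl addrC subrK.
under eq_bigr => u _ do rewrite -mulr_suml -mulr_sumr w_sum1 mulr1.
by rewrite -mulr_suml divff // gt_eqF // total_mass_gt0.
Qed.

Lemma outcome_prob_le1 o : outcome_prob o <= 1.
Proof.
rewrite -outcome_prob_sum1 (bigD1 o) //= lerDl.
by apply: sumr_ge0 => *; exact: outcome_prob_ge0.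
Qed.

Lemma expect_ge0 n g s : (forall s, 0 <= g s) -> 0 <= expect n g s.
Proof.
move=> g_ge0; elim: n s => [|n IH] s //=.
by apply: sumr_ge0 => o _; rewrite mulr_ge0 ?outcome_prob_ge0.
Qed.

Lemma ler_expect n g g' s : (forall s, g s <= g' s) -> expect n g s <= expect n g' s.
Proof.
move=> le_gg'; elim: n s => [|n IH] s //=.
by apply: ler_sum => o _; rewrite ler_wpM2l ?outcome_prob_ge0.
Qed.

Lemma expectD n g g' s :
  expect n (fun s => g s + g' s) s = expect n g s + expect n g' s.
Proof.
elim: n s => [|n IH] s //=.
by rewrite -big_split /=; apply: eq_bigr => o _; rewrite IH mulrDr.
Qed.

Lemma expectZ n a g s : expect n (fun s => a * g s) s = a * expect n g s.
Proof.
elim: n s => [|n IH] s //=.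
by rewrite mulr_sumr; apply: eq_bigr => o _; rewrite IH mulrCA.
Qed.

Lemma expect_addn a b g s : expect (a + b) g s = expect a (expect b g) s.
Proof. by elim: a s => [|a IH] s //=; apply: eq_bigr => o _; rewrite IH. Qed.

Lemma expect_swap n g s :
  expect n (fun s => g (s.2, s.1)) s = expect n g (s.2, s.1).
Proof. by elim: n s => [|n IH] s //=; apply: eq_bigr => o _; rewrite IH. Qed.

Lemma expect_invariant (P : pred ({set V} * {set V})) n g c s :
  (forall o s, P s -> P (pair_step o s)) -> (forall s, P s -> g s = c) ->
  P s -> expect n g s = c.
Proof.
move=> P_step Pg; elim: n s => [|n IH] s Ps /=; first exact: Pg.
under eq_bigr => o _ do rewrite IH ?P_step //.
by rewrite -mulr_suml outcome_prob_sum1 mul1r.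
Qed.

Lemma subharmonic_le_expect n g s :
  (forall s, g s <= \sum_o outcome_prob o * g (pair_step o s)) ->
  g s <= expect n g s.
Proof.
move=> g_sub; elim: n s => [|n IH] s //=.
apply: le_trans (g_sub s) _.
by apply: ler_sum => o _; rewrite ler_wpM2l ?outcome_prob_ge0.
Qed.

Lemma lazy_step0 o : lazy_step o set0 = set0.
Proof. by rewrite /lazy_step inE; case: ifP; rewrite ?set0D. Qed.

Lemma lazy_stepT o : lazy_step o setT = setT.
Proof. by rewrite /lazy_step inE setUT. Qed.

Lemma lazy_stepU o (A B : {set V}) :
  lazy_step o (A :|: B) = lazy_step o A :|: lazy_step o B.
Proof.
case: o => u [v b]; rewrite /lazy_step /= inE.
case: (u \in A); case: (u \in B); case: b => /=; apply/setP => y; rewrite !inE;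
  by case: (y == v); case: (y \in A); case: (y \in B).
Qed.

Lemma lazy_step_subset o (A B : {set V}) :
  A \subset B -> lazy_step o A \subset lazy_step o B.
Proof. by move=> /setUidPr <-; rewrite lazy_stepU subsetUl. Qed.

Lemma lazy_stepI o (A B : {set V}) :
  lazy_step o (A :&: B) \subset lazy_step o A :&: lazy_step o B.
Proof. by rewrite subsetI !lazy_step_subset ?subsetIl ?subsetIr. Qed.

Definition absorbed (X : {set V}) := (X == set0) || (X == setT).

Definition alive (X : {set V}) : R := (~~ absorbed X)%:R.

Lemma absorbedP X : reflect (X = set0 \/ X = setT) (absorbed X).
Proof. by apply: (iffP orP) => -[] X_eq; [left|right|left|right]; apply/eqP. Qed.

Lemma absorbed_step o X : absorbed X -> absorbed (lazy_step o X).
Proof. by case/absorbedP => ->; rewrite ?lazy_step0 ?lazy_stepT /absorbed eqxx ?orbT. Qed.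

Lemma exists_boundary_edge (X : {set V}) : X != set0 -> X != setT ->
  exists u v, [/\ u \in X, v \notin X & 0 < w u v].
Proof.
case/set0Pn => x xX; rewrite eqEsubset subsetT /= => /subsetPn [y _ yX].
have /connectP [p Ep y_last] := E_connect x y.
elim: p x xX Ep y_last => [|z p IH] x xX /=; first by move=> _ y_x; rewrite y_x xX in yX.
case/andP => Exz Ep y_last.
have [zX|zX] := boolP (z \in X); first exact: IH Ep y_last.
by exists x, z; split => //; exact: w_edge_gt0.
Qed.

(* Every positive outcome probability is at least this product, as all of
   its factors lie in (0, 1]. *)
Definition prob_lb : R := \prod_(o | 0 < outcome_prob o) outcome_prob o.

Lemma prob_lb_gt0 : 0 < prob_lb.
Proof. exact: prodr_gt0. Qed.

Lemma prob_lb_le o : 0 < outcome_prob o -> prob_lb <= outcome_prob o.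
Proof.
move=> o_gt0; rewrite /prob_lb (bigD1 o) //= ler_piMr ?(ltW o_gt0) //.
by apply: prodr_ile1 => i _; rewrite outcome_prob_ge0 outcome_prob_le1.
Qed.

Lemma prob_lb_le1 : prob_lb <= 1.
Proof. by apply: prodr_ile1 => i _; rewrite outcome_prob_ge0 outcome_prob_le1. Qed.

Definition fixation_within n s := expect n (fun s => (s.1 == setT)%:R) s.

Definition survival n s := expect n (fun s => alive s.1) s.

Lemma fixation_within_ge (k : nat) s :
  s.1 != set0 -> (#|~: s.1| <= k)%N -> prob_lb ^+ k <= fixation_within k s.
Proof.
elim: k s => [|k IH] s s1_0 s1_k.
  move: s1_k; rewrite leqn0 cards_eq0 => /eqP s1C.
  by rewrite /fixation_within /= -[s.1]setCK s1C setC0 eqxx.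
have [s1T|s1T] := eqVneq s.1 setT.
  rewrite /fixation_within (@expect_invariant (fun s => s.1 == setT) _ _ 1) ?s1T ?eqxx //.
  - by rewrite exprn_ile1 ?prob_lb_le1 ?ltW ?prob_lb_gt0.
  - by move=> o s' /eqP /= ->; rewrite lazy_stepT.
  - by move=> s' ->.
have [u [v [uX vX w_uv]]] := exists_boundary_edge _ s1_0 s1T.
pose o : outcome := (u, (v, true)).
have o_gt0 : 0 < outcome_prob o by rewrite /outcome_prob /= !mulr_gt0 ?invr_gt0 ?total_mass_gt0.
have step_o : (pair_step o s).1 = v |: s.1 by rewrite /pair_step /lazy_step /= uX.
rewrite /fixation_within /= (bigD1 o) //= -/(fixation_within _ _).
apply: (@le_trans _ _ (outcome_prob o * fixation_within k (pair_step o s))); last first.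
  rewrite lerDl; apply: sumr_ge0 => o' _; rewrite mulr_ge0 ?outcome_prob_ge0 //.
  by apply: expect_ge0 => s'; exact: ler0n.
rewrite exprS ler_pM ?exprn_ge0 ?prob_lb_le ?(ltW prob_lb_gt0) // IH // step_o.
  by apply/set0Pn; exists v; rewrite !inE eqxx.
move: s1_k; rewrite (cardsD1 v (~: s.1)) inE vX add1n ltnS.
by rewrite setCU setIC -setDE.
Qed.

Lemma survival_absorbed n s : absorbed s.1 -> survival n s = 0.
Proof.
move=> s1_abs; rewrite /survival (@expect_invariant (fun s => absorbed s.1) _ _ 0) //.
- by move=> o s' /= /(absorbed_step o).
- by move=> s' /= s'_abs; rewrite /alive s'_abs.
Qed.

Lemma survival_add_fixation n s : survival n s + fixation_within n s <= 1.
Proof.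
rewrite /survival /fixation_within -expectD.
rewrite -[leRHS](@expect_invariant predT n (fun _ => 1) 1 s) //.
apply: ler_expect => s' /=; rewrite /alive /absorbed.
by case: (s'.1 == setT); rewrite ?orbT ?orbF /= ?add0r ?addr0 ?lern1 ?leq_b1.
Qed.

(* A non-absorbed state reaches V within #|V| steps with probability at least
   prob_lb ^+ #|V|, so survival shrinks by the factor decay every #|V| steps. *)
Definition decay : R := 1 - prob_lb ^+ #|V|.

Lemma decay_ge0 : 0 <= decay.
Proof. by rewrite subr_ge0 exprn_ile1 ?prob_lb_le1 ?ltW ?prob_lb_gt0. Qed.

Lemma decay_lt1 : decay < 1.
Proof. by rewrite /decay ltrBlDr ltrDl exprn_gt0 ?prob_lb_gt0. Qed.

Lemma survival_card s : survival #|V| s <= decay * alive s.1.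
Proof.
have [s1_abs|s1_alive] := boolP (absorbed s.1).
  by rewrite survival_absorbed // /alive s1_abs mulr0.
rewrite /alive s1_alive mulr1.
have s1_0 : s.1 != set0 by apply: contra s1_alive => /eqP ->; rewrite /absorbed eqxx.
have := fixation_within_ge _ _ s1_0 (max_card _).
have := survival_add_fixation #|V| s; rewrite /decay; lra.
Qed.

Lemma survival_decay j s : survival (j * #|V|) s <= decay ^+ j * alive s.1.
Proof.
elim: j s => [|j IH] s; first by rewrite mul0n expr0 mul1r.
rewrite mulSn /survival expect_addn -/(survival _ _).
apply: le_trans (ler_expect _ _ _ _ IH) _.
rewrite expectZ -/(survival _ _) exprSr -mulrA ler_wpM2l ?exprn_ge0 ?decay_ge0 //.
exact: survival_card.
Qed.

Lemma alive_le1 X : alive X <= 1. Proof. by rewrite lern1 leq_b1. Qed.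

Lemma subharmonic_le0 (G : {set V} * {set V} -> R) :
  (forall s, G s <= \sum_o outcome_prob o * G (pair_step o s)) ->
  (forall s, absorbed s.1 -> absorbed s.2 -> G s <= 0) -> forall s, G s <= 0.
Proof.
move=> G_sub G_abs s.
pose c := \sum_s' `|G s'|.
have c_ge0 : 0 <= c by apply: sumr_ge0.
have G_le s' : G s' <= c * (alive s'.1 + alive s'.2).
  have G_le_c : G s' <= c.
    by apply: le_trans (ler_norm _) _; rewrite /c (bigD1 s') //= lerDl sumr_ge0.
  rewrite /alive; case: (boolP (absorbed s'.1)) => a1; case: (boolP (absorbed s'.2)) => a2;
    rewrite /= ?mulr0n ?mulr1n ?addr0 ?mulr0; [exact: G_abs | lra | lra | lra].
apply: (@le0_geometric _ _ (2 * c) decay decay_ge0 decay_lt1) => j.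
apply: le_trans (subharmonic_le_expect (j * #|V|) _ s G_sub) _.
apply: le_trans (ler_expect _ _ _ _ G_le) _.
rewrite expectZ expectD -/(survival _ _).
rewrite (expect_swap _ (fun s => alive s.1)) -/(survival _ _).
have surv_le s' : survival (j * #|V|) s' <= decay ^+ j.
  apply: le_trans (survival_decay j s') _.
  by rewrite ler_piMr ?alive_le1 ?exprn_ge0 ?decay_ge0.
rewrite -mulrA [leRHS]mulrCA ler_wpM2l //.
by have := surv_le s; have := surv_le (s.2, s.1); lra.
Qed.

Section HarmonicFunctions.
Variable h : {set V} -> R.
Hypothesis h_harmonic : forall X, h X = \sum_o outcome_prob o * h (lazy_step o X).
Hypothesis h_set0 : h set0 = 0.
Hypothesis h_ge0 : forall X, 0 <= h X.

Lemma harmonic_le_setU (A B : {set V}) : h A <= h (A :|: B).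
Proof.
rewrite -subr_le0.
apply: (subharmonic_le0 (fun s => h s.1 - h (s.1 :|: s.2)) _ _ (A, B))
  => [s|[X Y] /absorbedP[]-> _] /=.
- under eq_bigr => o _ do rewrite mulrBr -lazy_stepU.
  by rewrite sumrB -!h_harmonic.
- by rewrite set0U h_set0 sub0r oppr_le0.
- by rewrite setTU subrr.
Qed.

Lemma harmonic_subset_le (A B : {set V}) : A \subset B -> h A <= h B.
Proof. by move=> /setUidPr <-; exact: harmonic_le_setU. Qed.

Lemma harmonic_submod (A B : {set V}) : h (A :|: B) + h (A :&: B) <= h A + h B.
Proof.
rewrite -subr_le0 opprD addrA.
apply: (subharmonic_le0 (fun s => h (s.1 :|: s.2) + h (s.1 :&: s.2) - h s.1 - h s.2)
  _ _ (A, B)) => [s|[X Y] /absorbedP[]-> _] /=; last first.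
- by rewrite setTU setTI; lra.
- by rewrite set0U set0I; lra.
rewrite (h_harmonic (_ :|: _)) (h_harmonic (_ :&: _)) (h_harmonic s.1) (h_harmonic s.2).
rewrite -big_split -!sumrB /=; apply: ler_sum => o _.
rewrite lazy_stepU -mulrDr -!mulrBr ler_wpM2l ?outcome_prob_ge0 //.
have := harmonic_subset_le _ _ (lazy_stepI o s.1 s.2); lra.
Qed.
End HarmonicFunctions.


Definition moran_prob (X : {set V}) (u v : V) : R :=
  (fitness r m X u / \sum_x fitness r m X x) * w u v.

Lemma fitness_gt0 X u : 0 < fitness r m X u.
Proof.
by rewrite /fitness; case: ifP => _; [exact: lt_le_trans (r_gt0 u) (r_le_m u) | exact: r_gt0].
Qed.

Lemma total_fitness_gt0 X : 0 < \sum_x fitness r m X x.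
Proof.
rewrite (bigD1 v0) //= ltr_pwDl ?fitness_gt0 //.
by apply: sumr_ge0 => u _; exact: ltW (fitness_gt0 X u).
Qed.

Lemma moran_prob_ge0 X u v : 0 <= moran_prob X u v.
Proof. by rewrite /moran_prob mulr_ge0 ?w_ge0 ?divr_ge0 ?ltW ?fitness_gt0 ?total_fitness_gt0. Qed.

Lemma moran_prob_sum1 X : \sum_u \sum_v moran_prob X u v = 1.
Proof.
under eq_bigr => u _ do rewrite -mulr_sumr w_sum1 mulr1.
by rewrite -mulr_suml divff // gt_eqF // total_fitness_gt0.
Qed.

Lemma reach_withinS n X : X != setT -> reach_within w r m n.+1 X =
  \sum_u \sum_v moran_prob X u v * reach_within w r m n (moran_step X u v).
Proof. by move=> XT; rewrite /= (negbTE XT). Qed.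

Lemma reach_within_setT n : reach_within w r m n setT = 1.
Proof. by case: n => [|n] /=; rewrite eqxx. Qed.

Lemma reach_within_ge0 n X : 0 <= reach_within w r m n X.
Proof.
elim: n X => [|n IH] X; first by rewrite /=; case: ifP.
have [->|XT] := eqVneq X setT; first by rewrite /= eqxx.
by rewrite reach_withinS //; do 2!apply: sumr_ge0 => ? _; rewrite mulr_ge0 ?moran_prob_ge0.
Qed.

Lemma reach_within_le1 n X : reach_within w r m n X <= 1.
Proof.
elim: n X => [|n IH] X; first by rewrite /=; case: ifP.
have [->|XT] := eqVneq X setT; first by rewrite /= eqxx.
rewrite reach_withinS // -(moran_prob_sum1 X); do 2!apply: ler_sum => ? _.
by rewrite ler_piMr ?moran_prob_ge0.
Qed.

Lemma reach_within_leS n X : reach_within w r m n X <= reach_within w r m n.+1 X.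
Proof.
have [->|XT] := eqVneq X setT; first by rewrite !reach_within_setT.
elim: n X XT => [|n IH] X XT.
  by rewrite [reach_within _ _ _ 0 _]/= (negbTE XT) reach_within_ge0.
rewrite !reach_withinS //; apply: ler_sum => u _; apply: ler_sum => v _.
rewrite ler_wpM2l ?moran_prob_ge0 //.
by have [->|/IH] := eqVneq (moran_step X u v) setT; rewrite ?reach_within_setT.
Qed.

Lemma reach_within_cvg X : cvgn (fun n => reach_within w r m n X).
Proof.
apply: nondecreasing_is_cvgn; last by exists 1 => _ [n _ <-]; exact: reach_within_le1.
by apply/nondecreasing_seqP => n; exact: reach_within_leS.
Qed.

Lemma fp_ge0 X : 0 <= fp w r m X.
Proof.
by apply: limr_ge (reach_within_cvg X) _; apply: nearW => n; exact: reach_within_ge0.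
Qed.

Lemma fp_set0 : fp w r m set0 = 0.
Proof.
have T_neq0 : setT != set0 :> {set V} by apply/set0Pn; exists v0; rewrite inE.
rewrite /fp (_ : (fun n => _) = fun _ => 0); first exact: lim_cst.
apply: funext => n; elim: n => [|n IH] /=; rewrite eq_sym (negbTE T_neq0) //.
by rewrite big1 // => u _; rewrite big1 // => v _; rewrite /moran_step inE set0D IH mulr0.
Qed.

Lemma fp_moran_harmonic X : X != setT ->
  fp w r m X = \sum_u \sum_v moran_prob X u v * fp w r m (moran_step X u v).
Proof.
move=> XT.
have lim_S : ((fun n => reach_within w r m n.+1 X) @ \oo --> fp w r m X)%classic.
  by have := reach_within_cvg X; rewrite -cvg_shiftS.
rewrite -(cvg_lim (@Rhausdorff R) lim_S); apply: cvg_lim => //.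
rewrite (_ : (fun n => _) = fun n => \sum_u \sum_v
    moran_prob X u v * reach_within w r m n (moran_step X u v)).
  2: by apply: funext => n; rewrite reach_withinS.
apply: cvg_big => //; first exact: add_continuous.
move=> u _; apply: cvg_big => //; first exact: add_continuous.
by move=> v _; apply: cvgMl_tmp; exact: reach_within_cvg.
Qed.

(* Out of X the lazy chain makes a Moran step with probability
   (\sum_x fitness r m X x) / total_mass and stays at X otherwise. *)
Lemma fp_lazy_harmonic X : fp w r m X = \sum_o outcome_prob o * fp w r m (lazy_step o X).
Proof.
have [->|XT] := eqVneq X setT.
  by under eq_bigr do rewrite lazy_stepT; rewrite -mulr_suml outcome_prob_sum1 mul1r.
pose F := \sum_x fitness r m X x.
pose c u : R := if u \in X then 0 else m u - r u.
have M_split : total_mass = F + \sum_u c u.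
  rewrite /total_mass /F -big_split; apply: eq_bigr => u _ /=.
  by rewrite /fitness /c; case: ifP => _; rewrite ?addr0 // addrC subrK.
have F_neq0 : F != 0 by rewrite gt_eqF ?total_fitness_gt0.
have M_neq0 : total_mass != 0 by rewrite gt_eqF ?total_mass_gt0.
have coin_split u v :
    outcome_prob (u, (v, true)) * fp w r m (lazy_step (u, (v, true)) X)
    + outcome_prob (u, (v, false)) * fp w r m (lazy_step (u, (v, false)) X)
  = moran_prob X u v * fp w r m (moran_step X u v) * (F / total_mass)
    + c u * w u v * (fp w r m X / total_mass).
  rewrite /outcome_prob /lazy_step /moran_prob /fitness /moran_step /c /= -/F.
  by case: (u \in X); field; rewrite M_neq0 F_neq0.
rewrite sum_outcomeE; under eq_bigr => u _ do under eq_bigr => v _ do rewrite coin_split.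
under eq_bigr => u _ do rewrite big_split /= -!mulr_suml.
rewrite big_split /= -!mulr_suml -fp_moran_harmonic //.
under eq_bigr => u _ do rewrite -mulr_sumr w_sum1 mulr1.
by rewrite M_split; field; rewrite -M_split.
Qed.

Lemma fp_setT : fp w r m setT = 1.
Proof.
rewrite /fp (_ : (fun n => _) = fun _ => 1); first exact: lim_cst.
by apply: funext => n; exact: reach_within_setT.
Qed.

Lemma fp_monotone_submodular :
  [/\ forall A B : {set V}, A \subset B -> fp w r m A <= fp w r m B,
      forall A B : {set V},
        fp w r m (A :|: B) + fp w r m (A :&: B) <= fp w r m A + fp w r m B
    & 0 <= fp w r m set0].
Proof.
split; [exact: (harmonic_subset_le _ fp_lazy_harmonic fp_set0 fp_ge0)
       | exact: (harmonic_submod _ fp_lazy_harmonic fp_set0 fp_ge0)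
       | exact: fp_ge0].
Qed.

End CoupledLazyChain.

Lemma fitness_graph_fp_monotone_submodular {R : realType} {V : finType}
    {E : rel V} {w : V -> V -> R} {r m : V -> R} :
  is_fitness_graph E w r m -> mutant_biased r m ->
  [/\ forall A B : {set V}, A \subset B -> fp w r m A <= fp w r m B,
      forall A B : {set V},
        fp w r m (A :|: B) + fp w r m (A :&: B) <= fp w r m A + fp w r m B
    & 0 <= fp w r m set0].
Proof.
move=> [w_gt0 w_eq0 w_sum1 E_connect rm_gt0] r_le_m.
have w_ge0 u v : 0 <= w u v by have [/w_gt0/ltW|/w_eq0->] := boolP (E u v).
have r_gt0 u : 0 < r u by case: (rm_gt0 u).
have [v0 _|V_empty] := pickP (@predT V).
  exact: fp_monotone_submodular v0 w_ge0 w_sum1 w_gt0 E_connect r_gt0 r_le_m.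
have fp_1 (A : {set V}) : fp w r m A = 1.
  by rewrite (_ : A = setT) ?fp_setT //; apply/setP => y; have := V_empty y.
by split=> *; rewrite !fp_1 ?ler01.
Qed.

Theorem theorem3 (R : realType) (V : finType) (E : rel V) (w : V -> V -> R)
    (r m : V -> R) (k : nat) (Sopt : {set V}) (s : seq V) :
  is_fitness_graph E w r m ->
  mutant_biased r m ->
  (#|Sopt| <= k)%N ->
  (forall S : {set V}, (#|S| <= k)%N -> fp w r m S <= fp w r m Sopt) ->
  greedy_run w r m k s ->
  (1 - (expR 1)^-1) * fp w r m Sopt <= fp w r m (greedy_output s).
Proof.
(* The greedy bound holds against every set of size at most k. *)
move=> G r_le_m Sopt_k _ [size_s greedy].
have [fp_mono fp_submod fp_set0_ge0] := fitness_graph_fp_monotone_submodular G r_le_m.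
apply: (greedy_approx fp_mono fp_submod fp_set0_ge0 Sopt_k size_s).
by move=> p v t /greedy[].
Qed.
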